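(* Let $\mathcal{G}=(\mathcal{V},\mathcal{E})$ be a directed graph with terminals $s,t$, $f:2^{\mathcal{E}}\to\mathbb{R}_+$ normalized, monotone nondecreasing and submodular, and $C^*$ an $(s,t)$-cut minimizing $f$. Consider the following randomized greedy path cover algorithm: start with $C=\emptyset$, $y=0\in\{0,1\}^{\mathcal{E}}$; while the shortest $(s,t)$-path $P_{\min}$ with respect to edge lengths $y$ (ties broken arbitrarily) has $\sum_{e\in P_{\min}}y(e)<1$: if $\min_{e\in P_{\min}}f(e\mid C)=0$, add all edges of $P_{\min}$ with zero marginal cost to $C$ (setting $y(e)=1$); otherwise choose $\beta\in(0,\min_{e\in P_{\min}}f(e\mid C)]$ and, for each $e\in P_{\min}$, with probability $\beta/f(e\mid C)$ add $e$ to $C$ and set $y(e)=1$. Finally prune $C$ to a minimal $(s,t)$-cut $\widehat C'\subseteq C$ and return it. Then $\mathbb{E}[f(\widehat C')]\le |P_{\max}|\,f(C^* )$, where $P_{\max}$ is a longest simple $(s,t)$-path in $\mathcal{G}$ and $|P_{\max}|$ is its number of edges.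
   Context: An $(s,t)$-cut is a set of edges whose removal disconnects all $s$-$t$ paths; it is minimal if no proper subset is a cut. $f(e\mid C)=f(C\cup\{e\})-f(C)$ is the marginal cost. The expectation is over the random sampling of edges. *)

From HB Require Import structures.
From mathcomp Require Import all_boot all_order all_algebra.
From mathcomp Require Import boolp reals.
Set Implicit Arguments. Unset Strict Implicit. Unset Printing Implicit Defensive.
Import Order.TTheory GRing.Theory Num.Theory.
Local Open Scope ring_scope.

Section GreedyPathCover.
Variables (V E : finType) (src dst : E -> V) (s t : V).

Fixpoint walk_from (u : V) (P : seq E) (w : V) : bool :=
  match P with
  | [::] => u == w
  | e :: P' => (src e == u) && walk_from (dst e) P' w
  end.

Definition st_path (P : seq E) : bool :=
  walk_from s P t && uniq (s :: map dst P).

Definition is_cut (C : {set E}) : Prop :=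
  forall P, st_path P -> has (fun e => e \in C) P.

Definition minimal_cut (C : {set E}) : Prop :=
  is_cut C /\ forall D : {set E}, D \proper C -> ~ is_cut D.

Definition longest_st_path (P : seq E) : Prop :=
  st_path P /\ forall Q, st_path Q -> (size Q <= size P)%N.

Variable R : realType.

(* edge lengths y = indicator of C *)
Definition ylen (C : {set E}) (P : seq E) : R :=
  \sum_(e <- P) (e \in C)%:R.

Definition shortest_st_path (C : {set E}) (P : seq E) : Prop :=
  st_path P /\ forall Q, st_path Q -> ylen C P <= ylen C Q.

Definition loop_cont (C : {set E}) : Prop :=
  exists P, shortest_st_path C P /\ ylen C P < 1.

Variable f : {set E} -> R.

Definition normalized : Prop := f set0 = 0.
Definition nonneg_fun : Prop := forall A, 0 <= f A.
Definition monotone_fun : Prop := forall A B : {set E}, A \subset B -> f A <= f B.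
Definition submodular : Prop :=
  forall A B : {set E}, f (A :|: B) + f (A :&: B) <= f A + f B.

Definition marg (C : {set E}) (e : E) : R := f (e |: C) - f C.

(* Adversarial/arbitrary choices, allowed to depend on the history of states
   (list of previous sets C, most recent first) and the current set C:
   - pc h C   : the shortest path chosen (tie breaking),
   - beta h C : the chosen beta,
   - prune h C: the minimal cut obtained by pruning. *)
Variables (pc : seq {set E} -> {set E} -> seq E)
          (beta : seq {set E} -> {set E} -> R)
          (prune : seq {set E} -> {set E} -> {set E}).

Definition valid_choices : Prop :=
  [/\ (forall h C, loop_cont C -> shortest_st_path C (pc h C)),
      (forall h C, loop_cont C -> all (fun e => 0 < marg C e) (pc h C) ->
          0 < beta h C /\ all (fun e => beta h C <= marg C e) (pc h C))
    & (forall h C, ~ loop_cont C -> prune h C \subset C /\ minimal_cut (prune h C))].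

(* probability that exactly the edges of S (a subset of the edges of P) are
   sampled, each e in P independently with probability beta / f(e|C) *)
Definition sample_prob (C : {set E}) (P : seq E) (b : R) (S : {set E}) : R :=
  \prod_(e <- P) (if e \in S then b / marg C e else 1 - b / marg C e).

(* Partial expectation of f(output) over the runs that terminate within n
   loop iterations, starting from history h and current set C. *)
Fixpoint part_exp (n : nat) (h : seq {set E}) (C : {set E}) : R :=
  if `[< loop_cont C >] then
    match n with
    | 0 => 0
    | n'.+1 =>
      let P := pc h C in
      if has (fun e => marg C e == 0) P then
        part_exp n' (C :: h) (C :|: [set e in P | marg C e == 0])
      else
        \sum_(S in powerset [set e in P])
           sample_prob C P (beta h C) S * part_exp n' (C :: h) (C :|: S)
    end
  else f (prune h C).

End GreedyPathCover.

(* Track the potential  Phi(C) = f(C) + |P_max| (f(C* ) - f(C* :&: C)).  It starts at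
   |P_max| f(C* ) and dominates f of every subset of C, in particular of the pruned cut,
   so it suffices that Phi never increases in expectation.  Adding edges of zero
   marginal cost leaves f(C) unchanged by submodularity.  In a sampling round each
   edge e of the current path P enters C with probability beta / f(e|C), so the
   expected growth of f(C) is at most sum_e beta = beta |P| <= beta |P_max|.  Being
   an (s,t)-path, P meets the cut C* in some edge x, which enters with probability
   beta / f(x|C) and then raises f(C* :&: C) by at least f(x|C) (diminishing
   returns): an expected gain of beta, worth beta |P_max| in Phi. *)

From HB Require Import structures.
From mathcomp Require Import all_boot all_order all_algebra.
From mathcomp Require Import boolp reals lra.
Import Order.TTheory GRing.Theory Num.Theory.
Local Open Scope ring_scope.

Lemma sum_powersetU1 (T : finType) (R : nmodType) (x : T) (A : {set T})
    (F : {set T} -> R) :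
  x \notin A ->
  \sum_(S in powerset (x |: A)) F S = \sum_(S in powerset A) (F S + F (x |: S)).
Proof.
move=> xNA; rewrite big_split /= [LHS](bigID (fun S : {set T} => x \in S)) /= addrC.
have powersetA S : (S \in powerset A) = (S \subset x |: A) && (x \notin S).
  by rewrite powersetE -[in LHS](setU1K xNA) subsetD1.
congr (_ + _); first by apply: eq_bigl => S; rewrite powersetA powersetE.
rewrite (reindex_onto (fun S => x |: S) (fun S => S :\ x)) /=; last first.
  by move=> S /andP[_ xS]; rewrite setD1K.
apply: eq_bigl => S; rewrite powersetA !powersetE setU11 andbT.
apply/andP/andP => [[sxSxA /eqP <-] | [sSxA xNS]].
  by rewrite (subset_trans (subD1set _ _) sxSxA) !inE eqxx.
by rewrite setU1K // subUset sub1set setU11.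
Qed.

Lemma sum_powerset_prod (T : finType) (R : comPzSemiRingType) (a b : T -> R)
    (P : seq T) :
  uniq P ->
  \sum_(S in powerset [set e in P]) \prod_(e <- P) (if e \in S then a e else b e)
  = \prod_(e <- P) (a e + b e).
Proof.
elim: P => [_ | x P IH /= /andP[xNP uP]].
  by rewrite set_nil powerset0 big_set1 !big_nil.
rewrite set_cons sum_powersetU1 ?inE // big_cons -IH // big_distrr /=.
apply: eq_bigr => S; rewrite powersetE => sSP.
have xNS : x \notin S by apply: contra xNP => /(subsetP sSP); rewrite inE.
have prod_xS : \prod_(e <- P) (if e \in x |: S then a e else b e) =
               \prod_(e <- P) (if e \in S then a e else b e).
  apply: eq_big_seq => e eP.
  by rewrite in_setU1 (_ : e == x = false) //; apply: contraNF xNP => /eqP <-.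
by rewrite !big_cons (negbTE xNS) setU11 prod_xS mulrDl addrC.
Qed.

Section Submodular.
Context {T : finType} {R : realType} {f : {set T} -> R}.
Hypotheses (f_mono : monotone_fun f) (f_submod : submodular f).

Lemma marg_ge0 C e : 0 <= marg f C e.
Proof. by rewrite subr_ge0 f_mono // subsetUr. Qed.

Lemma marg_le_subset {C D : {set T}} e : C \subset D -> marg f D e <= marg f C e.
Proof.
move=> sCD; rewrite lerBlDr addrAC lerBrDr.
have := f_submod (e |: C) D; rewrite -setUA (setUidPr sCD).
by apply: le_trans; rewrite lerD2l f_mono // subsetI sCD subsetUr.
Qed.

Lemma f_setU_le_sum_marg (C : {set T}) (l : seq T) :
  f (C :|: [set e in l]) <= f C + \sum_(e <- l) marg f C e.
Proof.
elim: l => [|x l IH]; first by rewrite set_nil setU0 big_nil addr0.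
rewrite set_cons setUCA big_cons.
have := marg_le_subset x (subsetUl C [set e in l]); rewrite /marg in IH * => le_x.
lra.
Qed.

End Submodular.

Section Sampling.
Context {T : finType} {R : realType} {f : {set T} -> R} {C : {set T}} {P : seq T} {b : R}.
Hypotheses (P_uniq : uniq P) (marg_gt0 : {in P, forall e, 0 < marg f C e})
  (b_gt0 : 0 < b) (b_le_marg : {in P, forall e, b <= marg f C e}).

Local Notation p := (sample_prob f C P b).

Lemma sample_prob_ge0 S : 0 <= p S.
Proof.
rewrite /sample_prob big_seq; apply: prodr_ge0 => e eP; have m_gt0 := marg_gt0 e eP.
have b_le := b_le_marg e eP.
case: ifP => _; first by rewrite divr_ge0 // ltW.
by rewrite subr_ge0 ler_pdivrMr // mul1r.
Qed.

Lemma sum_sample_prob : \sum_(S in powerset [set e in P]) p S = 1.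
Proof. by rewrite sum_powerset_prod // big1 // => e _; rewrite subrKC. Qed.

Lemma sum_sample_prob_mem x : x \in P ->
  \sum_(S in powerset [set e in P]) p S * (x \in S)%:R = b / marg f C x.
Proof.
move=> xP; pose a e := b / marg f C e.
pose a' e := if e == x then 0 else 1 - a e.
rewrite (eq_bigr (fun S : {set T} => \prod_(e <- P) (if e \in S then a e else a' e))).
  rewrite sum_powerset_prod // (big_rem x xP) /= /a' eqxx addr0 big_seq big1 ?mulr1 //.
  move=> e; rewrite (mem_rem_uniq x P_uniq) !inE => /andP[/negbTE -> _].
  by rewrite subrKC.
move=> S _; rewrite /sample_prob /a' /a; case: (boolP (x \in S)) => [xS | xNS].
  rewrite mulr1; apply: eq_bigr => e _; case: ifP => // eNS.
  by rewrite (_ : e == x = false) //; apply: contraFF eNS => /eqP ->.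
by rewrite mulr0 (big_rem x xP) /= (negbTE xNS) eqxx mul0r.
Qed.

Lemma expect_sample_cost (c K : R) x : x \in P ->
  \sum_(S in powerset [set e in P])
      p S * (c + \sum_(e <- P) (e \in S)%:R * marg f C e - K * marg f C x * (x \in S)%:R)
  = c + b *+ size P - K * b.
Proof.
move=> xP.
rewrite (eq_bigr (fun S : {set T} => c * p S
    + \sum_(e <- P) p S * (e \in S)%:R * marg f C e
    - K * marg f C x * (p S * (x \in S)%:R))); last first.
  move=> S _; rewrite mulrBr mulrDr big_distrr /= mulrC mulrCA; congr (_ + _ - _).
  by apply: eq_bigr => e _; rewrite mulrA.
rewrite sumrB big_split /= -!big_distrr /= sum_sample_prob // sum_sample_prob_mem //.
rewrite exchange_big /= (eq_big_seq (fun=> b)) ?big_const_seq ?count_predT; last first.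
  by move=> e eP; rewrite -big_distrl /= sum_sample_prob_mem // divfK // gt_eqF ?marg_gt0.
by rewrite iter_addr_0 mulr1 -mulrA [marg f C x * _]mulrC divfK // gt_eqF ?marg_gt0.
Qed.

End Sampling.

Lemma st_path_uniq {V E : finType} {src dst : E -> V} {s t : V} {P : seq E} :
  st_path src dst s t P -> uniq P.
Proof. by case/andP => _ /= /andP[_ /map_uniq]. Qed.

Section PathCover.
Context {V E : finType} {src dst : E -> V} {s t : V} {R : realType}
  {f : {set E} -> R}
  {pc : seq {set E} -> {set E} -> seq E}
  {beta : seq {set E} -> {set E} -> R}
  {prune : seq {set E} -> {set E} -> {set E}}
  {Cstar : {set E}} {Pmax : seq E}.
Hypotheses (f_ge0 : nonneg_fun f) (f_mono : monotone_fun f) (f_submod : submodular f)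
  (Cstar_cut : is_cut src dst s t Cstar)
  (Pmax_longest : longest_st_path src dst s t Pmax)
  (choices_valid : valid_choices src dst s t f pc beta prune).

Local Notation L := (size Pmax)%:R.

Definition potential (C : {set E}) : R := f C + L * (f Cstar - f (Cstar :&: C)).

Lemma potential_ge_f {C D : {set E}} : D \subset C -> f D <= potential C.
Proof.
move=> sDC; rewrite -[f D]addr0 lerD ?f_mono // mulr_ge0 // subr_ge0.
by rewrite f_mono ?subsetIl.
Qed.

Lemma potential_setU_zero_marg (C : {set E}) (P : seq E) :
  potential (C :|: [set e in P | marg f C e == 0]) <= potential C.
Proof.
have f_le : f (C :|: [set e in P | marg f C e == 0]) <= f C.
  have -> : [set e in P | marg f C e == 0] = [set e in [seq e <- P | marg f C e == 0]].
    by apply/setP => e; rewrite !inE mem_filter andbC.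
  apply: le_trans (f_setU_le_sum_marg f_mono f_submod _ _) _.
  by rewrite big_filter big1 ?addr0 // => e /eqP.
have meet_le : f (Cstar :&: C) <= f (Cstar :&: (C :|: [set e in P | marg f C e == 0])).
  by rewrite f_mono // setIS // subsetUl.
rewrite /potential lerD // ler_wpM2l // lerB //.
Qed.

Lemma potential_setU_sample (C S : {set E}) (P : seq E) x :
  S \subset [set e in P] -> x \in Cstar ->
  potential (C :|: S) <=
    potential C + \sum_(e <- P) (e \in S)%:R * marg f C e - L * marg f C x * (x \in S)%:R.
Proof.
move=> sSP xCstar.
have f_le : f (C :|: S) <= f C + \sum_(e <- P) (e \in S)%:R * marg f C e.
  have S_filter : [set e in [seq e <- P | e \in S]] = S.
    apply/setP => e; rewrite inE mem_filter andb_idr // => eS.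
    by have := subsetP sSP e eS; rewrite inE.
  rewrite -{1}S_filter; apply: le_trans (f_setU_le_sum_marg f_mono f_submod _ _) _.
  rewrite big_filter big_mkcond /= lerD2l.
  by apply: ler_sum => e _; case: (e \in S); rewrite ?mul1r ?mul0r.
have meet_ge : f (Cstar :&: C) + (x \in S)%:R * marg f C x <= f (Cstar :&: (C :|: S)).
  case: (boolP (x \in S)) => [xS | _]; last by rewrite mul0r addr0 f_mono // setIS // subsetUl.
  have := marg_le_subset f_mono f_submod x (subsetIr Cstar C).
  have : f (x |: Cstar :&: C) <= f (Cstar :&: (C :|: S)).
    by rewrite f_mono // subUset sub1set !inE xCstar xS orbT /= setIS // subsetUl.
  rewrite /marg mul1r; lra.
have := ler_wpM2l (ler0n R (size Pmax)) meet_ge.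
rewrite /potential mulrDr mulrA; lra.
Qed.

Lemma expect_potential_sample {C : {set E}} {P : seq E} {b : R} {x : E} :
  uniq P -> (size P <= size Pmax)%N ->
  {in P, forall e, 0 < marg f C e} -> 0 < b -> {in P, forall e, b <= marg f C e} ->
  x \in P -> x \in Cstar ->
  \sum_(S in powerset [set e in P]) sample_prob f C P b S * potential (C :|: S)
    <= potential C.
Proof.
move=> P_uniq P_short marg_gt0 b_gt0 b_le_marg xP xCstar.
apply: le_trans (_ : \sum_(S in powerset [set e in P]) sample_prob f C P b S *
    (potential C + \sum_(e <- P) (e \in S)%:R * marg f C e
       - L * marg f C x * (x \in S)%:R) <= _).
  apply: ler_sum => S; rewrite powersetE => sSP.
  by rewrite ler_wpM2l ?sample_prob_ge0 ?potential_setU_sample.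
rewrite expect_sample_cost // lerBlDr lerD2l -[b *+ _]mulr_natl.
by rewrite ler_pM2r // ler_nat.
Qed.

Lemma part_exp_le_potential n h C :
  part_exp src dst s t f pc beta prune n h C <= potential C.
Proof.
have [pc_shortest beta_valid prune_valid] := choices_valid.
elim: n h C => [|n IH] h C /=;
  case: asboolP => [cont | /(prune_valid h) [pruned_sub _]];
  try exact: potential_ge_f pruned_sub.
  exact: le_trans (f_ge0 set0) (potential_ge_f (sub0set C)).
have [P_st _] := pc_shortest h C cont.
case: ifP => [_ | no_zero]; first exact: le_trans (IH _ _) (potential_setU_zero_marg _ _).
have marg_gt0 : {in pc h C, forall e, 0 < marg f C e}.
  move=> e eP; rewrite lt_def marg_ge0 // andbT.
  by apply: contraFN no_zero => /eqP me0; apply/hasP; exists e; rewrite ?me0.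
have [b_gt0 /allP b_le_marg] := beta_valid h C cont (introT allP marg_gt0).
have [x xP xCstar] := hasP (Cstar_cut _ P_st).
apply: le_trans (expect_potential_sample (st_path_uniq P_st) (proj2 Pmax_longest _ P_st)
  marg_gt0 b_gt0 b_le_marg xP xCstar).
by apply: ler_sum => S _; rewrite ler_wpM2l ?sample_prob_ge0.
Qed.

End PathCover.

Theorem lemma7 (V E : finType) (src dst : E -> V) (s t : V) (R : realType)
  (f : {set E} -> R)
  (pc : seq {set E} -> {set E} -> seq E)
  (beta : seq {set E} -> {set E} -> R)
  (prune : seq {set E} -> {set E} -> {set E})
  (Cstar : {set E}) (Pmax : seq E) :
  injective (fun e => (src e, dst e)) ->
  normalized f -> nonneg_fun f -> monotone_fun f -> submodular f ->
  is_cut src dst s t Cstar ->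
  (forall C, is_cut src dst s t C -> f Cstar <= f C) ->
  longest_st_path src dst s t Pmax ->
  valid_choices src dst s t f pc beta prune ->
  forall n : nat,
    part_exp src dst s t f pc beta prune n [::] set0 <= (size Pmax)%:R * f Cstar.
Proof.
move=> _ f_norm f_ge0 f_mono f_submod Cstar_cut _ Pmax_longest choices_valid n.
apply: le_trans (part_exp_le_potential f_ge0 f_mono f_submod Cstar_cut Pmax_longest
  choices_valid n [::] set0) _.
by rewrite /potential setI0 f_norm subr0 add0r.
Qed.
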